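(* Let $d,n\in\mathbb{N}$, $R>1$, $\epsilon\ge0$, and let $K_r(x,y)$ be a polynomial in $(x,y)$ whose operator $\mathcal K_rf(x)=\int_{-R}^RK_r(x,y)f(y)\,dy$ satisfies $\|\mathcal K_rT_k-T_k\|_{1,\mathrm{cheb}}\le\epsilon$ for all $0\le k\le d$. Let $K_{r,n}(x,y)=\prod_{i=1}^nK_r(x_i,y_i)$ and $\mathcal K_{r,n}f(x)=\int_{[-R,R]^n}K_{r,n}(x,y)f(y)\,dy$. Then for every $\alpha\in\mathbb{N}_0^n$ with $\alpha_i\le d$ for all $i$, \[ \|\mathcal K_{r,n}T_\alpha-T_\alpha\|_{1,\mathrm{cheb}}\le\epsilon\sum_{i=0}^{n-1}(1+\epsilon)^i. \] Moreover, if $\epsilon\le1/n$, then $\|\mathcal K_{r,n}T_\alpha-T_\alpha\|_{1,\mathrm{cheb}}\le e\,\epsilon\, n$.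
   Context: $T_k(x)=\cos(k\arccos x)$ is the Chebyshev polynomial of the first kind; for $\alpha\in\mathbb{N}_0^n$, $T_\alpha(x)=\prod_iT_{\alpha_i}(x_i)$; for a polynomial $p=\sum_\alpha p_\alpha T_\alpha$, $\|p\|_{1,\mathrm{cheb}}=\sum_\alpha|p_\alpha|$. $e$ is Euler's number. *)

From HB Require Import structures.
From mathcomp Require Import all_boot all_order all_algebra.
From mathcomp Require Import mpoly.
From mathcomp Require Import reals.
From mathcomp Require sequences.
From Stdlib Require Import ClassicalEpsilon.

Set Implicit Arguments.
Unset Strict Implicit.
Unset Printing Implicit Defensive.

Import Order.TTheory GRing.Theory Num.Theory.
Local Open Scope ring_scope.

Fixpoint cheb_at (A : pzRingType) (x : A) (k : nat) : A :=
  match k with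
  | 0 => 1
  | S k' => match k' with
            | 0 => x
            | S k'' => 2%:R * x * cheb_at x k' - cheb_at x k''
            end
  end.

Definition chebT (R : realType) (n : nat) (alpha : 'X_{1..n}) : {mpoly R[n]} :=
  \prod_(i < n) cheb_at ('X_i : {mpoly R[n]}) (alpha i).
Arguments chebT {R n}.

(* The Chebyshev coefficients of p: the (unique) family (c_alpha) indexed by the
   multi-indices of total degree < msize p (= 1 + deg p) with p = sum_alpha c_alpha T_alpha. *)
Definition cheb_coefs (R : realType) (n : nat) (p : {mpoly R[n]})
  : {ffun 'X_{1..n < msize p} -> R} :=
  epsilon (inhabits [ffun=> 0])
    (fun c : {ffun 'X_{1..n < msize p} -> R} =>
       p = \sum_(a : 'X_{1..n < msize p}) c a *: chebT (val a)).

Definition cheb_norm1 (R : realType) (n : nat) (p : {mpoly R[n]}) : R :=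
  \sum_(a : 'X_{1..n < msize p}) `|cheb_coefs p a|.

(* int_{[-Rb,Rb]^n} y^b dy *)
Definition box_int_mono (R : realType) (n : nat) (Rb : R) (b : 'X_{1..n}) : R :=
  \prod_(i < n) ((Rb ^+ (b i).+1 - (- Rb) ^+ (b i).+1) / ((b i).+1)%:R).

(* The kernel K_{r,n}(x,y) = prod_i K_r(x_i, y_i), as a polynomial in the 2n variables
   (x_1..x_n, y_1..y_n); K : {mpoly R[2]} is K_r(x,y) with variable 0 = x, 1 = y. *)
Definition kernel_n (R : realType) (n : nat) (K : {mpoly R[2]}) : {mpoly R[n + n]} :=
  \prod_(i < n) (K \mPo [tuple ('X_(lshift n i) : {mpoly R[n + n]}); 'X_(rshift n i)]).

Definition in_y (R : realType) (n : nat) (f : {mpoly R[n]}) : {mpoly R[n + n]} :=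
  f \mPo [tuple ('X_(rshift n i) : {mpoly R[n + n]}) | i < n].

Definition xpart (n : nat) (m : 'X_{1..n + n}) : 'X_{1..n} := [multinom m (lshift n i) | i < n].
Definition ypart (n : nat) (m : 'X_{1..n + n}) : 'X_{1..n} := [multinom m (rshift n i) | i < n].

(* (K_{r,n} f)(x) = int_{[-Rb,Rb]^n} K_{r,n}(x,y) f(y) dy, computed exactly on the
   polynomial G(x,y) = K_{r,n}(x,y) f(y) monomial by monomial:
   int x^a y^b dy = x^a * int_{[-Rb,Rb]^n} y^b dy. *)
Definition Kop (R : realType) (n : nat) (K : {mpoly R[2]}) (Rb : R) (f : {mpoly R[n]})
  : {mpoly R[n]} :=
  let G := kernel_n n K * in_y f in
  \sum_(m <- msupp G) (G@_m * box_int_mono Rb (ypart m)) *: 'X_[xpart m].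

Definition euler (R : realType) : R := sequences.expR (1 : R).

(* Chebyshev polynomials are triangular in the monomial basis: the coefficient
   of x^b in T_a vanishes unless b <= a componentwise, and that of x^a is a
   product of nonzero leading coefficients.  Hence Chebyshev expansions are
   unique, so ||p||_{1,cheb} is bounded by the l1 norm of the coefficients of
   any expansion of p into Chebyshev polynomials, and for sums of products of
   univariate polynomials in distinct variables it is bounded by the sums of
   the products of the univariate norms.
   Both T_alpha and the kernel K_{r,n} factor over the coordinates, and so
   does the integral over the box, hence K_{r,n} T_alpha = prod_i K_r T_{alpha_i}
   evaluated at x_i.  Telescoping
     prod_i a_i - prod_i b_i = sum_k (prod_{i<k} a_i) (a_k - b_k) (prod_{i>k} b_i)
   with ||K_r T_j|| <= 1 + eps, ||K_r T_j - T_j|| <= eps and ||T_j|| = 1 gives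
   the bound eps * sum_k (1 + eps)^k, and (1 + eps)^k <= exp (k eps) <= e
   when eps <= 1/n. *)

From HB Require Import structures.
From mathcomp Require Import all_boot all_order all_algebra.
From mathcomp Require Import ssrcomplements mpoly.
From mathcomp Require Import reals.
From mathcomp Require Import sequences exp.
From mathcomp Require Import ring.
From Stdlib Require Import ClassicalEpsilon.

Set Implicit Arguments.
Unset Strict Implicit.
Unset Printing Implicit Defensive.

Import Order.TTheory GRing.Theory Num.Theory.
Local Open Scope ring_scope.

Lemma cheb_atSS (A : pzRingType) (x : A) k :
  cheb_at x k.+2 = 2%:R * x * cheb_at x k.+1 - cheb_at x k.
Proof. by []. Qed.

Lemma rmorph_cheb_at (A B : pzRingType) (f : {rmorphism A -> B}) (x : A) k :
  f (cheb_at x k) = cheb_at (f x) k.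
Proof.
elim/ltn_ind: k => -[|[|k]] IH; rewrite ?rmorph1 //.
by rewrite !cheb_atSS rmorphB !rmorphM rmorph_nat !IH.
Qed.

Definition chebp (R : nzRingType) (k : nat) : {poly R} := cheb_at 'X k.

Lemma size_chebp (R : numDomainType) k : size (chebp R k) = k.+1.
Proof.
elim/ltn_ind: k => -[|[|k]] IH; first exact: size_poly1.
  exact: size_polyX.
have -> : chebp R k.+2 = chebp R k.+1 *+ 2 * 'X - chebp R k.
  by rewrite /chebp cheb_atSS; ring.
have chebp_neq0 : chebp R k.+1 *+ 2 != 0.
  by rewrite -size_poly_eq0 -scaler_nat size_scale ?IH ?pnatr_eq0.
rewrite size_polyDl size_mulX // -scaler_nat size_scale ?pnatr_eq0 // IH //.
by rewrite size_polyN IH.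
Qed.

Lemma cheb_at_expand (R : numDomainType) (A : algType R) (x : A) k N : (k < N)%N ->
  cheb_at x k = \sum_(l < N) (chebp R k)`_l *: x ^+ l.
Proof.
move=> ltkN; have -> : cheb_at x k = horner_alg x (chebp R k).
  by rewrite /chebp rmorph_cheb_at /= horner_algX.
rewrite /horner_alg /horner_morph (@horner_coef_wide _ N); last first.
  by rewrite map_polyE (leq_trans (size_Poly _)) // size_map size_chebp.
by apply: eq_bigr => l _; rewrite coef_map /= mulr_algl.
Qed.

Lemma leq_mnm_mdeg n (m : 'X_{1..n}) i : (m i <= mdeg m)%N.
Proof. by rewrite mdegE (bigD1 i) //= leq_addr. Qed.

Lemma mdeg_mnm1 (m : 'X_{1..1}) : mdeg m = m ord0.
Proof. by rewrite mdegE big_ord1. Qed.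

Lemma lepm_mdeg_eq n (a b : 'X_{1..n}) : (a <= b)%MM -> (mdeg b <= mdeg a)%N -> a = b.
Proof.
move=> le_ab; rewrite -(submK le_ab) mdegD -{2}[mdeg a]add0n leq_add2r leqn0.
by rewrite mdeg_eq0 => /eqP ->; rewrite add0m.
Qed.

Lemma msize_le (R : nzRingType) n (p : {mpoly R[n]}) s :
  (forall m, (s <= mdeg m)%N -> p@_m = 0) -> (msize p <= s)%N.
Proof.
move=> p0; rewrite msizeE; apply/bigmax_leqP_seq => m; rewrite mcoeff_msupp => pm_neq0 _.
by rewrite ltnNge; apply: contra pm_neq0 => /p0 ->.
Qed.

Lemma sum_bmnm_fibers n (V : zmodType) (J : finType) (g : J -> 'X_{1..n}) D (F : J -> V) :
  (forall j, ~~ (mdeg (g j) < D)%N -> F j = 0) ->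
  \sum_(b : 'X_{1..n < D}) \sum_(j | g j == val b) F j = \sum_j F j.
Proof.
move=> F_out; rewrite (exchange_big_dep xpredT) //=; apply: eq_bigr => j _.
have [lt_gD|ge_gD] := boolP (mdeg (g j) < D)%N.
  by rewrite (big_pred1 (BMultinom lt_gD)).
by rewrite F_out // big1.
Qed.

Lemma sum_msupp_sumX (R : nzRingType) k (V : lmodType R) (phi : 'X_{1..k} -> V)
    (J : finType) (c : J -> R) (mu : J -> 'X_{1..k}) :
  let G := \sum_j c j *: 'X_[mu j] in
  \sum_(m <- msupp G) G@_m *: phi m = \sum_j c j *: phi (mu j).
Proof.
move=> G; pose D := maxn (msize G) (\max_j (mdeg (mu j)).+1).
have lt_muD j : (mdeg (mu j) < D)%N.
  by rewrite leq_max (@leq_bigmax _ (fun j => (mdeg (mu j)).+1)) orbT.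
rewrite (big_mksub ('X_{1..k < D} : subFinType _)) ?msupp_uniq //=; last first.
  by move=> m /msize_mdeg_lt/leq_trans; apply; rewrite leq_maxl.
rewrite big_rmcond /= => [|m /memN_msupp_eq0 ->]; last by rewrite scale0r.
under eq_bigr do rewrite raddf_sum scaler_suml.
rewrite exchange_big /=; apply: eq_bigr => j _.
rewrite (bigD1 (BMultinom (lt_muD j))) //= big1 => [|m ne_m].
  by rewrite mcoeffZ mcoeffX eqxx mulr1 addr0.
rewrite mcoeffZ mcoeffX; case: eqP => [eq_mu|]; last by rewrite mulr0 scale0r.
by rewrite -val_eqE /= eq_mu eqxx in ne_m.
Qed.

Lemma prodrB_telescope (A : comPzRingType) n (x y : 'I_n -> A) :
  \prod_i x i - \prod_i y i =
  \sum_(k < n) \prod_(i < n) (if (i < k)%N then x i else if i == k then x i - y i else y i).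
Proof.
pose Q k := \prod_(i < n) (if (i < k)%N then x i else y i).
have -> : \prod_i x i = Q n by apply: eq_bigr => i _; rewrite ltn_ord.
have -> : \prod_i y i = Q 0%N by apply: eq_bigr.
rewrite -(telescope_sumr Q (leq0n n)) big_mkord; apply: eq_bigr => k _.
rewrite /Q (bigD1 k) //= [X in _ - X](bigD1 k) //= [RHS](bigD1 k) //=.
rewrite ltnSn ltnn eqxx mulrBl.
congr (_ * _ - _ * _); apply: eq_bigr => i ne_ik; rewrite (negbTE ne_ik) //.
by rewrite ltnS leq_eqVlt val_eqE (negbTE ne_ik).
Qed.

Lemma prod_if_lt_eq (A : comPzRingType) n (k : 'I_n) (x e : A) :
  \prod_(i < n) (if (i < k)%N then x else if i == k then e else 1) = x ^+ k * e.
Proof.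
rewrite (bigD1 k) //= ltnn eqxx mulrC; congr (_ * _).
transitivity (\prod_(i < n | (i < k)%N) x).
  rewrite [RHS]big_mkcond [RHS](bigD1 k) //= ltnn mul1r.
  by apply: eq_bigr => i ne_ik; rewrite (negbTE ne_ik).
by rewrite -(big_ord_widen _ (fun _ => x) (ltnW (ltn_ord k))) prodr_const card_ord.
Qed.

Section ChebyshevCoefficients.
Variable R : realType.

Lemma mcoeff_chebT n (a m : 'X_{1..n}) :
  (@chebT R n a)@_m = \prod_(i < n) (chebp R (a i))`_(m i).
Proof.
pose N := (mdeg a + mdeg m).+1.
have ltmN i : (m i < N)%N by rewrite ltnS (leq_trans (leq_mnm_mdeg m i)) ?leq_addl.
have -> : chebT a = \sum_(f : {ffun 'I_n -> 'I_N})
    (\prod_(i < n) (chebp R (a i))`_(f i)) *: 'X_[[multinom (f i : nat) | i < n]].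
  rewrite /chebT (eq_bigr (fun i => \sum_(l < N) (chebp R (a i))`_l *: 'X_i ^+ l)).
    rewrite bigA_distr_bigA; apply: eq_bigr => f _.
    by rewrite scaler_prod mpolyXE_id; congr (_ *: _); apply: eq_bigr => i _; rewrite mnmE.
  move=> i _; apply: cheb_at_expand.
  by rewrite ltnS (leq_trans (leq_mnm_mdeg a i)) ?leq_addr.
pose fm : {ffun 'I_n -> 'I_N} := [ffun i => Ordinal (ltmN i)].
rewrite raddf_sum [LHS](bigD1 fm) //= [X in _ + X]big1 => [|f ne_f_fm]; rewrite mcoeffZ mcoeffX.
  have -> : [multinom (fm i : nat) | i < n] = m by apply/mnmP => i; rewrite !mnmE ffunE.
  by rewrite eqxx mulr1 addr0; apply: eq_bigr => i _; rewrite ffunE.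
case: eqP => [eq_fm|]; last by rewrite mulr0.
case/eqP: ne_f_fm; apply/ffunP => i; apply/val_inj.
by rewrite ffunE /= -eq_fm mnmE.
Qed.

Lemma mcoeff_chebT_eq0 n (a m : 'X_{1..n}) i : (a i < m i)%N -> (@chebT R n a)@_m = 0.
Proof.
move=> lt_ami; rewrite mcoeff_chebT (bigD1 i) //= nth_default ?mul0r //.
by rewrite size_chebp.
Qed.

Lemma mcoeff_chebT_diag n (a : 'X_{1..n}) : (@chebT R n a)@_a != 0.
Proof.
rewrite mcoeff_chebT; apply/prodf_neq0 => i _.
have -> : (chebp R (a i))`_(a i) = lead_coef (chebp R (a i)).
  by rewrite lead_coefE size_chebp.
by rewrite lead_coef_eq0 -size_poly_eq0 size_chebp.
Qed.

End ChebyshevCoefficients.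

Section ChebyshevNorm.
Variable R : realType.
Implicit Types (n : nat) (J : finType).

Lemma chebT_rep_mdeg_lt n J (g : J -> 'X_{1..n}) (c : J -> R) (p : {mpoly R[n]}) :
  injective g -> p = \sum_j c j *: chebT (g j) ->
  forall j, c j != 0 -> (mdeg (g j) < msize p)%N.
Proof.
move=> g_inj ->{p} j cj_neq0.
have [j0 cj0_neq0 j0_max] := @arg_maxnP _ j [pred k | c k != 0] (mdeg \o g) cj_neq0.
apply: leq_ltn_trans (j0_max j cj_neq0) _; apply: msize_mdeg_lt.
rewrite mcoeff_msupp raddf_sum (bigD1 j0) //= big1 ?addr0 => [|k ne_kj0].
  by rewrite mcoeffZ mulf_neq0 ?mcoeff_chebT_diag.
rewrite mcoeffZ; have [->|ck_neq0] := eqVneq (c k) 0; first by rewrite mul0r.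
have [le_gj0k|] := boolP (g j0 <= g k)%MM.
  have /g_inj eq_j0k := lepm_mdeg_eq le_gj0k (j0_max k ck_neq0).
  by rewrite eq_j0k eqxx in ne_kj0.
by rewrite negb_forall => /existsP[i]; rewrite -ltnNge => /mcoeff_chebT_eq0 ->; rewrite mulr0.
Qed.

Lemma cheb_coefsE n (p : {mpoly R[n]}) (e : 'X_{1..n < msize p} -> R) :
  p = \sum_b e b *: chebT (val b) -> forall b, cheb_coefs p b = e b.
Proof.
move=> p_e.
pose is_rep (c : {ffun 'X_{1..n < msize p} -> R}) := p = \sum_b c b *: chebT (val b).
have p_coefs : is_rep (cheb_coefs p).
  by apply: epsilon_spec; exists [ffun b => e b]; rewrite /is_rep; under eq_bigr do rewrite ffunE.
have rep0 : 0 = \sum_b (cheb_coefs p b - e b) *: @chebT R n (val b).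
  by under eq_bigr do rewrite scalerBl; rewrite sumrB -p_coefs -p_e subrr.
move=> b; apply/eqP; rewrite -subr_eq0; apply/negP => /negP.
by move/(chebT_rep_mdeg_lt val_inj rep0); rewrite msize0.
Qed.

Lemma cheb_norm1E n J (g : J -> 'X_{1..n}) (c : J -> R) (p : {mpoly R[n]}) :
  injective g -> p = \sum_j c j *: chebT (g j) -> cheb_norm1 p = \sum_j `|c j|.
Proof.
move=> g_inj p_rep; have lt_msize := chebT_rep_mdeg_lt g_inj p_rep.
have fibers (V : zmodType) (F : J -> V) : (forall j, c j = 0 -> F j = 0) ->
    \sum_(b : 'X_{1..n < msize p}) \sum_(j | g j == val b) F j = \sum_j F j.
  by move=> F0; apply: sum_bmnm_fibers => j /(contraNeq (lt_msize j))/F0.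
rewrite /cheb_norm1 -(fibers _ (fun j => `|c j|)) => [|j ->]; last by rewrite normr0.
apply: eq_bigr => b _.
rewrite (cheb_coefsE (e := fun b => \sum_(j | g j == val b) c j)); last first.
  rewrite {1}p_rep -fibers => [|j ->]; last by rewrite scale0r.
  by apply: eq_bigr => b' _; rewrite scaler_suml; apply: eq_bigr => j /eqP ->.
case: (pickP (fun j => g j == val b)) => [j0 /eqP gj0|no_j]; last by rewrite !big_pred0 ?normr0.
by rewrite !(big_pred1 j0) // => j /=; rewrite -gj0 (inj_eq g_inj).
Qed.

Lemma cheb_norm1_le n J (g : J -> 'X_{1..n}) (c : J -> R) (p : {mpoly R[n]}) :
  p = \sum_j c j *: chebT (g j) -> cheb_norm1 p <= \sum_j `|c j|.
Proof.
move=> p_rep; pose D := (\max_j (mdeg (g j)).+1)%N.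
have fibers (V : zmodType) (F : J -> V) :
    \sum_(b : 'X_{1..n < D}) \sum_(j | g j == val b) F j = \sum_j F j.
  by apply: sum_bmnm_fibers => j; rewrite (@leq_bigmax _ (fun j => (mdeg (g j)).+1)).
rewrite (@cheb_norm1E _ 'X_{1..n < D} val (fun b => \sum_(j | g j == val b) c j) _ val_inj).
  by rewrite -fibers; apply: ler_sum => b _; apply: ler_norm_sum.
by rewrite p_rep -fibers; apply: eq_bigr => b _; rewrite scaler_suml; apply: eq_bigr => j /eqP ->.
Qed.

Lemma cheb_norm1_ge0 n (p : {mpoly R[n]}) : 0 <= cheb_norm1 p.
Proof. by apply: sumr_ge0 => b _. Qed.

Lemma cheb_norm1_chebT n (a : 'X_{1..n}) : cheb_norm1 (@chebT R n a) = 1.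
Proof.
rewrite (@cheb_norm1E _ _ (fun _ : 'I_1 => a) (fun _ => 1)) => [|i j _|].
- by rewrite big_ord1 normr1.
- by rewrite !ord1.
- by rewrite big_ord1 scale1r.
Qed.

End ChebyshevNorm.

Section UnivariateChebyshevNorm.
Variable R : realType.

Definition cheb1 (k : nat) : {mpoly R[1]} := chebT [multinom k | _ < 1].

Lemma cheb1_rep (p : {mpoly R[1]}) N : (msize p <= N)%N ->
  exists c : nat -> R, p = \sum_(j < N) c j *: cheb1 j.
Proof.
elim: N p => [|N IH] p.
  by rewrite leqn0 msize_poly_eq0 => /eqP->; exists (fun=> 0); rewrite big_ord0.
move=> le_pN; pose mN := [multinom N | _ < 1].
pose a := p@_mN / (cheb1 N)@_mN.
have [|c q_rep] := IH (p - a *: cheb1 N).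
  apply: msize_le => m; rewrite leq_eqVlt => /orP[/eqP eq_Nm|lt_Nm].
    have -> : m = mN by apply/mnmP => i; rewrite ord1 mnmE eq_Nm mdeg_mnm1.
    by rewrite mcoeffB mcoeffZ divfK ?subrr ?mcoeff_chebT_diag.
  rewrite mcoeffB mcoeffZ (@mcoeff_chebT_eq0 _ _ _ _ ord0) ?mnmE -?mdeg_mnm1 //.
  by rewrite mulr0 subr0 memN_msupp_eq0 // msize_mdeg_ge // (leq_trans le_pN).
exists (fun j => if j == N then a else c j); rewrite big_ord_recr /= eqxx.
rewrite -[p](subrK (a *: cheb1 N)) q_rep; congr (_ + _).
by apply: eq_bigr => j _; rewrite ltn_eqF.
Qed.

Lemma cheb_norm1_cheb1_rep (p : {mpoly R[1]}) N : (msize p <= N)%N ->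
  exists c : nat -> R,
    p = \sum_(j < N) c j *: cheb1 j /\ cheb_norm1 p = \sum_(j < N) `|c j|.
Proof.
move=> /cheb1_rep[c p_rep]; exists c; split=> //.
apply: (cheb_norm1E _ p_rep) => i j /mnmP/(_ ord0).
by rewrite !mnmE => /val_inj.
Qed.

Lemma cheb_norm1D_le (p q : {mpoly R[1]}) :
  cheb_norm1 (p + q) <= cheb_norm1 p + cheb_norm1 q.
Proof.
pose N := (msize p + msize q)%N.
have [cp [p_rep ->]] := @cheb_norm1_cheb1_rep p N (leq_addr _ _).
have [cq [q_rep ->]] := @cheb_norm1_cheb1_rep q N (leq_addl _ _).
apply: le_trans (@cheb_norm1_le _ _ _ (fun j : 'I_N => [multinom (j : nat) | _ < 1])
                                (fun j => cp j + cq j) _ _) _.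
  by rewrite p_rep q_rep -big_split; apply: eq_bigr => j _; rewrite scalerDl.
by rewrite -big_split; apply: ler_sum => j _; apply: ler_normD.
Qed.

End UnivariateChebyshevNorm.

Definition in_var (R : comNzRingType) n (i : 'I_n) : {mpoly R[1]} -> {mpoly R[n]} :=
  comp_mpoly [tuple 'X_i].

HB.instance Definition _ (R : comNzRingType) n (i : 'I_n) :=
  GRing.LRMorphism.on (@in_var R n i).

Section SeparatedProducts.
Variable R : realType.

Lemma in_var_cheb1 n (i : 'I_n) k : in_var i (cheb1 R k) = cheb_at 'X_i k.
Proof.
by rewrite /cheb1 /chebT big_ord1 mnmE rmorph_cheb_at /= /in_var comp_mpolyXU.
Qed.

Lemma chebT_in_var n (a : 'X_{1..n}) : chebT a = \prod_(i < n) in_var i (cheb1 R (a i)).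
Proof. by apply: eq_bigr => i _; rewrite in_var_cheb1. Qed.

Lemma in_varX n (i : 'I_n) k : in_var i 'X_[[multinom k | _ < 1]] = 'X_i ^+ k :> {mpoly R[n]}.
Proof. by rewrite /in_var comp_mpolyX big_ord1 mnmE. Qed.

Lemma cheb_norm1_sum_prod_le n m (p : 'I_m -> 'I_n -> {mpoly R[1]}) :
  cheb_norm1 (\sum_(k < m) \prod_(i < n) in_var i (p k i))
    <= \sum_(k < m) \prod_(i < n) cheb_norm1 (p k i).
Proof.
pose N := (\max_(ki : 'I_m * 'I_n) msize (p ki.1 ki.2))%N.
have le_pN (ki : 'I_m * 'I_n) : (msize (p ki.1 ki.2) <= N)%N by exact: leq_bigmax.
have /fin_all_exists[c c_rep] ki := cheb_norm1_cheb1_rep (le_pN ki).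
apply: le_trans (@cheb_norm1_le _ _ _ (fun kf : 'I_m * {ffun 'I_n -> 'I_N} =>
    [multinom (kf.2 i : nat) | i < n]) (fun kf => \prod_i c (kf.1, i) (kf.2 i)) _ _) _.
  rewrite -(pair_bigA _ (fun k (f : {ffun 'I_n -> 'I_N}) =>
    (\prod_i c (k, i) (f i)) *: chebT [multinom (f i : nat) | i < n])) /=.
  apply: eq_bigr => k _.
  under eq_bigr => i _ do rewrite (c_rep (k, i)).1 linear_sum.
  rewrite bigA_distr_bigA /=; apply: eq_bigr => f _.
  rewrite chebT_in_var -scaler_prod; apply: eq_bigr => i _.
  by rewrite linearZ mnmE.
rewrite -(pair_bigA _ (fun k (f : {ffun 'I_n -> 'I_N}) => `|\prod_i c (k, i) (f i)|)) /=.
apply: ler_sum => k _.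
under [X in _ <= X]eq_bigr => i _ do rewrite (c_rep (k, i)).2.
by under eq_bigr do rewrite normr_prod; rewrite bigA_distr_bigA.
Qed.

End SeparatedProducts.

Section IntegralOperator.
Variables (R : realType) (Rb : R).

Definition in_xy n (i : 'I_n) : {mpoly R[2]} -> {mpoly R[n + n]} :=
  comp_mpoly [tuple ('X_(lshift n i) : {mpoly R[n + n]}); 'X_(rshift n i)].

HB.instance Definition _ n (i : 'I_n) := GRing.LRMorphism.on (@in_xy n i).

Definition mnm_xy n (i : 'I_n) (u : 'X_{1..2}) : 'X_{1..n + n} :=
  (U_(lshift n i) *+ u ord0 + U_(rshift n i) *+ u ord_max)%MM.

Definition int_y_mnm n (m : 'X_{1..n + n}) : {mpoly R[n]} :=
  box_int_mono Rb (ypart m) *: 'X_[xpart m].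

Definition int_y n (G : {mpoly R[n + n]}) : {mpoly R[n]} :=
  \sum_(m <- msupp G) G@_m *: int_y_mnm m.

Lemma KopE n (K : {mpoly R[2]}) (f : {mpoly R[n]}) :
  Kop K Rb f = int_y (kernel_n n K * in_y f).
Proof. by apply: eq_bigr => m _; rewrite scalerA. Qed.

Lemma in_xyE n (i : 'I_n) (P : {mpoly R[2]}) D : (msize P <= D)%N ->
  in_xy i P = \sum_(u : 'X_{1..2 < D}) P@_u *: 'X_[mnm_xy i u].
Proof.
move=> le_PD; rewrite {1}(mpolywE le_PD) linear_sum; apply: eq_bigr => u _.
rewrite linearZ /= /in_xy comp_mpolyX big_ord_recl big_ord1 mpolyXD -!mpolyXn.
by rewrite (_ : lift ord0 ord0 = ord_max) //; apply: val_inj.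
Qed.

Lemma xpart_sum_mnm_xy n (f : 'I_n -> 'X_{1..2}) :
  xpart (\sum_i mnm_xy i (f i))%MM = [multinom f i ord0 | i < n].
Proof.
apply/mnmP => j; rewrite !mnmE mnm_sumE (bigD1 j) //= big1 => [|i ne_ij].
  by rewrite mnmDE !mulmnE !mnm1E eqxx eq_rlshift mul1n mul0n !addn0.
rewrite mnmDE !mulmnE !mnm1E eq_rlshift (inj_eq (@lshift_inj _ _)).
by rewrite (negbTE ne_ij).
Qed.

Lemma ypart_sum_mnm_xy n (f : 'I_n -> 'X_{1..2}) :
  ypart (\sum_i mnm_xy i (f i))%MM = [multinom f i ord_max | i < n].
Proof.
apply/mnmP => j; rewrite !mnmE mnm_sumE (bigD1 j) //= big1 => [|i ne_ij].
  by rewrite mnmDE !mulmnE !mnm1E eqxx eq_lrshift mul1n mul0n !addn0.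
rewrite mnmDE !mulmnE !mnm1E eq_lrshift (inj_eq (@rshift_inj _ _)).
by rewrite (negbTE ne_ij).
Qed.

Lemma int_y_mnm_sum_xy n (f : 'I_n -> 'X_{1..2}) :
  int_y_mnm (\sum_i mnm_xy i (f i))%MM =
  \prod_i in_var i (int_y_mnm (mnm_xy (n := 1) ord0 (f i))).
Proof.
have mnm_xy1 u : mnm_xy (n := 1) ord0 u = (\sum_(i < 1) mnm_xy i u)%MM by rewrite big_ord1.
under [RHS]eq_bigr => i _.
  rewrite mnm_xy1 /int_y_mnm xpart_sum_mnm_xy ypart_sum_mnm_xy linearZ /= in_varX.
  rewrite /box_int_mono big_ord1 mnmE.
  over.
rewrite scaler_prod /int_y_mnm xpart_sum_mnm_xy ypart_sum_mnm_xy mpolyXE_id.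
by congr (_ *: _); apply: eq_bigr => i _; rewrite mnmE.
Qed.

Lemma int_y_prod_in_xy n (P : 'I_n -> {mpoly R[2]}) :
  int_y (\prod_i in_xy i (P i)) = \prod_i in_var i (int_y (in_xy (n := 1) ord0 (P i))).
Proof.
pose D := (\max_i msize (P i))%N.
have le_PD i : (msize (P i) <= D)%N by exact: leq_bigmax.
under [RHS]eq_bigr => i _.
  rewrite (in_xyE _ (le_PD i)) /int_y sum_msupp_sumX linear_sum /=.
  under eq_bigr do rewrite linearZ /=.
  over.
rewrite bigA_distr_bigA /=.
under [RHS]eq_bigr do rewrite scaler_prod -int_y_mnm_sum_xy.
under eq_bigr => i _ do rewrite (in_xyE _ (le_PD i)).
rewrite bigA_distr_bigA /=.
under eq_bigr do rewrite scaler_prod mprodXE.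
by rewrite /int_y sum_msupp_sumX.
Qed.

Lemma kernel_in_y_chebT n (K : {mpoly R[2]}) (a : 'X_{1..n}) :
  kernel_n n K * in_y (chebT a) = \prod_i in_xy i (K * cheb_at 'X_ord_max (a i)).
Proof.
rewrite /in_y /chebT rmorph_prod -big_split /=; apply: eq_bigr => i _.
rewrite rmorphM !rmorph_cheb_at /=; congr (_ * cheb_at _ _).
by rewrite /in_xy !comp_mpolyXU /= (nth_mktuple _ 0 i).
Qed.

Lemma Kop_chebT n (K : {mpoly R[2]}) (a : 'X_{1..n}) :
  Kop K Rb (chebT a) = \prod_i in_var i (Kop K Rb (cheb1 R (a i))).
Proof.
rewrite KopE kernel_in_y_chebT int_y_prod_in_xy; apply: eq_bigr => i _.
by rewrite KopE kernel_in_y_chebT big_ord1 mnmE.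
Qed.

End IntegralOperator.

Lemma geometric_sum_le_euler (R : realType) n (eps : R) : 0 <= eps -> eps <= 1 / n%:R ->
  eps * \sum_(i < n) (1 + eps) ^+ i <= euler R * eps * n%:R.
Proof.
move=> eps_ge0 eps_le; rewrite -mulrA mulrCA ler_wpM2l // mulr_natr.
rewrite -[X in _ *+ X](card_ord n) -sumr_const; apply: ler_sum => i _.
have n_gt0 : (0 < n)%N by apply: leq_ltn_trans (ltn_ord i).
apply: le_trans (_ : expR eps ^+ i <= _).
  by rewrite lerXn2r ?nnegrE ?expR_ge0 ?addr_ge0 ?expR_ge1Dx.
rewrite -expRM_natr ler_expR (le_trans (_ : _ <= eps * n%:R)) //.
- by rewrite ler_wpM2l // ler_nat ltnW.
- by rewrite -ler_pdivlMr ?ltr0n.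
Qed.

Theorem lemma15 (R : realType) (d n : nat) (Rb eps : R) (K : {mpoly R[2]}) :
  1 < Rb -> 0 <= eps ->
  (forall k : nat, (k <= d)%N ->
     cheb_norm1 (Kop K Rb (chebT [multinom k | i < 1]) - chebT [multinom k | i < 1]) <= eps) ->
  forall alpha : 'X_{1..n}, (forall i : 'I_n, (alpha i <= d)%N) ->
    cheb_norm1 (Kop K Rb (chebT alpha) - chebT alpha)
      <= eps * \sum_(i < n) (1 + eps) ^+ i
    /\ (eps <= 1 / n%:R ->
        cheb_norm1 (Kop K Rb (chebT alpha) - chebT alpha) <= euler R * eps * n%:R).
Proof.
(* The bound holds for every box [-Rb, Rb]^n. *)
move=> _ eps_ge0 K_err alpha alpha_le.
suff err_le : cheb_norm1 (Kop K Rb (chebT alpha) - chebT alpha)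
                <= eps * \sum_(i < n) (1 + eps) ^+ i.
  by split=> // eps_small; apply: le_trans err_le (geometric_sum_le_euler eps_ge0 eps_small).
pose P i := Kop K Rb (cheb1 R (alpha i)); pose Q i := cheb1 R (alpha i).
have normQ i : cheb_norm1 (Q i) = 1 := cheb_norm1_chebT _ _.
have normPQ i : cheb_norm1 (P i - Q i) <= eps := K_err _ (alpha_le i).
have normP i : cheb_norm1 (P i) <= 1 + eps.
  rewrite -(subrK (Q i) (P i)) addrC; apply: le_trans (cheb_norm1D_le _ _) _.
  by rewrite normQ lerD2l.
rewrite Kop_chebT chebT_in_var prodrB_telescope.
under eq_bigr => k _.
  rewrite (eq_bigr (fun i => in_var i
      (if (i < k)%N then P i else if i == k then P i - Q i else Q i))); last first.
    by move=> i _; case: ifP => _; [|case: ifP => _; rewrite ?raddfB].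
  over.
apply: le_trans (cheb_norm1_sum_prod_le _) _; rewrite mulr_sumr; apply: ler_sum => k _.
rewrite mulrC -prod_if_lt_eq; apply: ler_prod => i _; rewrite cheb_norm1_ge0 /=.
by case: ifP => _; [|case: ifP => _; rewrite ?normQ].
Qed.
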